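(* Let $\Omega$ be a connected weighted simplicial complex on $[n]$, let $\mathcal V_0,\ldots,\mathcal V_n$ be complex vector spaces and $\mathcal V=\mathcal V_0\otimes\cdots\otimes\mathcal V_n$ (algebraic tensor product). Then every $v\in\mathcal V$ satisfies ${\rm rank}_\Omega(v)<\infty$, i.e. every $v\in\mathcal V$ admits an $\Omega$-decomposition.
   Context: $[n]=\{0,\ldots,n\}$. A weighted simplicial complex (wsc) on $[n]$ is a function $\Omega\colon\mathcal P([n])\to\mathbb N=\{0,1,\ldots\}$ such that $S_1\subseteq S_2$ implies $\Omega(S_1)\mid\Omega(S_2)$; simplices are sets with $\Omega(S)\ne0$, every singleton is assumed to be a simplex, and facets are inclusion-maximal simplices. $\widetilde{\mathcal F}$ is the multiset containing each facet $F$ exactly $\Omega(F)$ times, and for $i\in[n]$, $\widetilde{\mathcal F}_i\subseteq\widetilde{\mathcal F}$ is the sub-multiset of (copies of) facets containing $i$. Vertices $i,j$ are neighbours if some facet contains both; $\Omega$ is connected if any two vertices are joined by a finite chain of successive neighbours. For a finite set $\mathcal I$ and $\alpha\colon\widetilde{\mathcal F}\to\mathcal I$, write $\alpha_{\mid i}$ for the restriction of $\alpha$ to $\widetilde{\mathcal F}_i$. An $\Omega$-decomposition of $v\in\mathcal V$ consists of a finite set $\mathcal I$ and vectors $v^{[i]}_\beta\in\mathcal V_i$ for $i\in[n]$ and $\beta\in\mathcal I^{\widetilde{\mathcal F}_i}$ (functions $\widetilde{\mathcal F}_i\to\mathcal I$) such that $v=\sum_{\alpha\in\mathcal I^{\widetilde{\mathcal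 F}}}v^{[0]}_{\alpha_{\mid 0}}\otimes\cdots\otimes v^{[n]}_{\alpha_{\mid n}}$. ${\rm rank}_\Omega(v)$ is the smallest $|\mathcal I|$ over all $\Omega$-decompositions of $v$, and $\infty$ if none exists. *)

From HB Require Import structures.
From mathcomp Require Import all_boot all_order all_algebra.
From mathcomp Require Import complex.
From mathcomp Require Import Rstruct.
Set Implicit Arguments. Unset Strict Implicit. Unset Printing Implicit Defensive.
Import Order.TTheory GRing.Theory Num.Theory.
Local Open Scope ring_scope.

Definition CC : fieldType := complex Rdefinitions.R.

Definition is_wsc (n : nat) (Om : {set 'I_n.+1} -> nat) : Prop :=
  (forall S1 S2 : {set 'I_n.+1}, S1 \subset S2 -> (Om S1 %| Om S2)%N) /\
  (forall i : 'I_n.+1, Om [set i] != 0%N).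

Definition simplex (n : nat) (Om : {set 'I_n.+1} -> nat) (S : {set 'I_n.+1}) : bool :=
  Om S != 0%N.

Definition facet (n : nat) (Om : {set 'I_n.+1} -> nat) (F : {set 'I_n.+1}) : bool :=
  simplex Om F && [forall T : {set 'I_n.+1}, (F \proper T) ==> ~~ simplex Om T].

Definition neighbours (n : nat) (Om : {set 'I_n.+1} -> nat) : rel 'I_n.+1 :=
  fun i j => [exists F : {set 'I_n.+1}, [&& facet Om F, i \in F & j \in F]].

Definition wsc_connected (n : nat) (Om : {set 'I_n.+1} -> nat) : Prop :=
  forall i j : 'I_n.+1, connect (neighbours Om) i j.

(* The multiset \tilde F: copies (F, k) with F a facet and k < Om F. *)
Definition copies (n : nat) (Om : {set 'I_n.+1} -> nat) : finType :=
  {S : {set 'I_n.+1} & 'I_(Om S)}.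

Definition Ft (n : nat) (Om : {set 'I_n.+1} -> nat) : finType :=
  {p : copies Om | facet Om (tag p)}.

Definition Ft_facet (n : nat) (Om : {set 'I_n.+1} -> nat) (p : Ft Om) : {set 'I_n.+1} :=
  tag (val p).

Definition Fti (n : nat) (Om : {set 'I_n.+1} -> nat) (i : 'I_n.+1) : finType :=
  {p : Ft Om | i \in Ft_facet p}.

Definition restr (n : nat) (Om : {set 'I_n.+1} -> nat) (J : finType)
  (alpha : {ffun Ft Om -> J}) (i : 'I_n.+1) : {ffun Fti Om i -> J} :=
  [ffun q => alpha (val q)].

Definition multilinear (I : finType) (K : pzRingType) (V : I -> lmodType K)
  (W : lmodType K) (t : (forall i, V i) -> W) : Prop :=
  forall (x : forall i, V i) (i : I) (a : K) (y z : V i),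
    t (dfwith x (a *: y + z)) = a *: t (dfwith x y) + t (dfwith x z).

(* (W, t) is an algebraic tensor product of the V i: t is multilinear, W is
   spanned by the pure tensors, and every multilinear map factors linearly
   through t (together: the universal property of the tensor product). *)
Definition is_tensor_product (I : finType) (K : pzRingType) (V : I -> lmodType K)
  (W : lmodType K) (t : (forall i, V i) -> W) : Prop :=
  [/\ multilinear t,
      (forall w : W, exists (m : nat) (c : 'I_m -> K) (x : 'I_m -> forall i, V i),
          w = \sum_(k < m) c k *: t (x k))
    & (forall (U : lmodType K) (f : (forall i, V i) -> U), multilinear f ->
          exists g : W -> U, linear g /\ (forall x, f x = g (t x)))].

Definition Omega_decomposition (n : nat) (Om : {set 'I_n.+1} -> nat)
  (K : pzRingType) (V : 'I_n.+1 -> lmodType K) (W : lmodType K)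
  (t : (forall i, V i) -> W) (v : W) (r : nat)
  (vv : forall i : 'I_n.+1, {ffun Fti Om i -> 'I_r} -> V i) : Prop :=
  v = \sum_(alpha : {ffun Ft Om -> 'I_r}) t (fun i => vv i (restr alpha i)).

Definition has_Omega_decomposition (n : nat) (Om : {set 'I_n.+1} -> nat)
  (K : pzRingType) (V : 'I_n.+1 -> lmodType K) (W : lmodType K)
  (t : (forall i, V i) -> W) (v : W) : Prop :=
  exists (r : nat) (vv : forall i : 'I_n.+1, {ffun Fti Om i -> 'I_r} -> V i),
    Omega_decomposition t v vv.

From HB Require Import structures.
From mathcomp Require Import all_boot all_order all_algebra.
From Stdlib Require Import FunctionalExtensionality.
Set Implicit Arguments. Unset Strict Implicit. Unset Printing Implicit Defensive.
Import GRing.Theory.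
Local Open Scope ring_scope.

(* Absorbing each coefficient into one factor writes v as a sum of m pure
   tensors y_k.  Give every vertex i the vector (y_k)_i on the constant
   labelling beta = k of the facet copies through i, and 0 on every other
   labelling.  In the sum over labellings alpha of all facet copies, a
   constant alpha = k contributes the pure tensor y_k; for any other alpha
   some restriction to a vertex is non-constant (otherwise the constant values
   would agree along every edge, hence everywhere by connectedness), so that
   tensor has a zero factor.  Hence rank_Omega(v) <= m. *)

Lemma dfwith_id (I : eqType) (T : I -> Type) (f : forall i, T i) (i : I) :
  dfwith f (f i) = f.
Proof. by apply: functional_extensionality_dep => j; case: dfwithP. Qed.

Lemma sum_supported_on_codom (I J : finType) (U : nmodType) (h : J -> I)
    (G : I -> U) :
  injective h -> (forall i, i \notin h @: setT -> G i = 0) ->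
  \sum_i G i = \sum_j G (h j).
Proof.
move=> h_inj G_out; rewrite -(big_rmcond _ _ G_out) big_imset.
  by apply: eq_bigl => j; rewrite inE.
by move=> j1 j2 _ _ /h_inj.
Qed.

Section Multilinear.
Variables (I : finType) (K : pzRingType) (V : I -> lmodType K) (W : lmodType K).
Variable t : (forall i, V i) -> W.
Hypothesis t_ml : multilinear t.

Lemma multilinear_dfwith0 x i : t (dfwith x (0 : V i)) = 0.
Proof.
have := @t_ml x i 1 0 0; rewrite scaler0 addr0 scale1r => tx0_twice.
by apply: (@addrI _ (t (dfwith x (0 : V i)))); rewrite addr0 -tx0_twice.
Qed.

Lemma multilinear_eq0 x i : x i = 0 -> t x = 0.
Proof. by move=> xi0; rewrite -(dfwith_id x i) xi0 multilinear_dfwith0. Qed.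

Lemma multilinear_scale x i a : t (dfwith x (a *: x i)) = a *: t x.
Proof.
have := @t_ml x i a (x i) 0.
by rewrite addr0 multilinear_dfwith0 addr0 dfwith_id.
Qed.

End Multilinear.

Lemma tensor_product_sum_pure (I : finType) (K : pzRingType)
    (V : I -> lmodType K) (W : lmodType K) (t : (forall i, V i) -> W) (i0 : I) :
  is_tensor_product t ->
  forall w, exists m (y : 'I_m -> forall i, V i), w = \sum_(k < m) t (y k).
Proof.
case=> t_ml t_span _ w; have [m [c [x ->]]] := t_span w.
exists m, (fun k => dfwith (x k) (c k *: x k i0)).
by apply: eq_bigr => k _; rewrite multilinear_scale.
Qed.

Section WeightedSimplicialComplex.
Variables (n : nat) (Om : {set 'I_n.+1} -> nat).
Hypothesis Om_wsc : is_wsc Om.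

Lemma facet_neq0 F : facet Om F -> F != set0.
Proof.
case/andP=> _ /forallP F_max; apply: contraTneq (F_max [set ord0]) => ->.
by rewrite proper0 -card_gt0 cards1 /simplex; case: Om_wsc => _ ->.
Qed.

Lemma exists_facet_mem i : exists2 F, facet Om F & i \in F.
Proof.
pose simplex_through (S : {set 'I_n.+1}) := (i \in S) && simplex Om S.
have simplex_i : simplex_through [set i].
  by rewrite /simplex_through set11 /simplex; case: Om_wsc => _ ->.
have [F /andP[iF sF] F_max] :=
  arg_maxnP (fun S : {set 'I_n.+1} => #|S|) simplex_i.
exists F => //; rewrite /facet sF; apply/forallP => T; apply/implyP => FT.
apply/negP => sT.
have /F_max : simplex_through T.
  by rewrite /simplex_through sT (subsetP (proper_sub FT)).
by rewrite /= leqNgt proper_card.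
Qed.

Definition facet_copy0 F (F_facet : facet Om F) : Ft Om.
Proof.
refine (exist _ (existT (fun S => 'I_(Om S)) F (@Ordinal _ 0 _)) F_facet).
by case/andP: F_facet; rewrite lt0n.
Defined.

Lemma Fti_card_gt0 i : (0 < #|Fti Om i|)%N.
Proof.
have [F F_facet iF] := exists_facet_mem i.
by apply/card_gt0P; exists (exist _ (facet_copy0 F_facet) iF).
Qed.

Lemma restr_const (J : finType) (k : J) i :
  restr ([ffun=> k] : {ffun Ft Om -> J}) i = [ffun=> k].
Proof. by apply/ffunP => q; rewrite !ffunE. Qed.

Hypothesis Om_connected : wsc_connected Om.

Lemma restr_const_const (J : finType) (alpha : {ffun Ft Om -> J}) :
  (forall i, exists k, restr alpha i = [ffun=> k]) ->
  exists k, alpha = [ffun=> k].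
Proof.
move=> restr_constant; have [k alpha0] := restr_constant ord0.
have restr_step i j : neighbours Om i j ->
    restr alpha i = [ffun=> k] -> restr alpha j = [ffun=> k].
  case/existsP=> F /and3P[F_facet iF jF] alpha_i.
  have [k' alpha_j] := restr_constant j; rewrite alpha_j.
  move/ffunP/(_ (exist _ (facet_copy0 F_facet) iF)): alpha_i.
  move/ffunP/(_ (exist _ (facet_copy0 F_facet) jF)): alpha_j.
  by rewrite !ffunE => <- ->.
have alpha_all i : restr alpha i = [ffun=> k].
  have /connectP[s s_path ->] := Om_connected ord0 i.
  elim: s ord0 alpha0 s_path => //= j s IH i0 alpha_i0 /andP[i0j s_path].
  exact: IH (restr_step _ _ i0j alpha_i0) s_path.
exists k; apply/ffunP => p; have /set0Pn[i iF] := facet_neq0 (valP p).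
by move/ffunP/(_ (exist _ p iF)): (alpha_all i); rewrite !ffunE.
Qed.

Variables (K : pzRingType) (V : 'I_n.+1 -> lmodType K) (W : lmodType K).
Variable t : (forall i, V i) -> W.
Hypothesis t_ml : multilinear t.
Variables (m : nat) (y : 'I_m -> forall i, V i).

Definition sum_pure_factor i (beta : {ffun Fti Om i -> 'I_m}) : V i :=
  if [pick k | beta == [ffun=> k]] is Some k then y k i else 0.

Lemma sum_pure_factor_const i k : sum_pure_factor (i := i) [ffun=> k] = y k i.
Proof.
rewrite /sum_pure_factor; case: pickP => [k' /eqP/ffunP|/(_ k)]; last first.
  by rewrite eqxx.
by have [q _] := card_gt0P (Fti_card_gt0 i); move/(_ q); rewrite !ffunE => ->.
Qed.

Lemma Omega_decomposition_sum_pure :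
  Omega_decomposition t (\sum_(k < m) t (y k)) sum_pure_factor.
Proof.
have const_inj : injective (fun k : 'I_m => [ffun=> k] : {ffun Ft Om -> 'I_m}).
  have [q _] := card_gt0P (Fti_card_gt0 ord0).
  by move=> k1 k2 /ffunP/(_ (val q)); rewrite !ffunE.
rewrite /Omega_decomposition (sum_supported_on_codom const_inj) => [|alpha].
  apply: eq_bigr => k _; congr t; apply: functional_extensionality_dep => i.
  by rewrite restr_const sum_pure_factor_const.
apply: contraNeq => tensor_neq0.
have [|k ->] := restr_const_const (alpha := alpha); last exact: imset_f.
move=> i; apply/exists_eqP; apply: contraNT tensor_neq0.
rewrite negb_exists => /forallP restr_nonconst.
apply/eqP/(multilinear_eq0 t_ml (i := i)); rewrite /sum_pure_factor.
by case: pickP => // k; rewrite (negbTE (restr_nonconst k)).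
Qed.

End WeightedSimplicialComplex.

Theorem theorem3p4 (n : nat) (Om : {set 'I_n.+1} -> nat)
  (V : 'I_n.+1 -> lmodType CC) (W : lmodType CC)
  (t : (forall i, V i) -> W) :
  is_wsc Om -> wsc_connected Om -> is_tensor_product t ->
  forall v : W, has_Omega_decomposition Om t v.
Proof.
move=> Om_wsc Om_connected t_tensor v.
have [m [y ->]] := tensor_product_sum_pure ord0 t_tensor v.
have [t_ml _ _] := t_tensor.
exists m, (sum_pure_factor y).
exact: (Omega_decomposition_sum_pure Om_wsc Om_connected t_ml y).
Qed.
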